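(* Let $(q_l)_{l\ge1}$ be positive numbers with $q_1=1$ and $0<R:=\lim_{l\to\infty}q_l/q_{l+1}<\infty$, and assume (NEQ): $\tilde f(1)<1$, or $\tilde f(1)=1$ and $\tilde g(1)=\infty$. Let $\rho^*>0$. Then $$\inf\{\tilde A(z):\ z\in X_{0+},\ \rho(z)=\rho^*\}=0,$$ and this infimum is not attained by any $z\in X_{0+}$ with $\rho(z)=\rho^*$.
   Context: $X=\{z=(z_l)_{l\ge1}:\sum_l l|z_l|<\infty\}$, $X_{0+}$ its nonnegative elements, $\rho(z)=\sum_l lz_l$, $N(z)=\sum_l z_l$. Set $\tilde q_l=q_lR^l$, $\tilde f(\mu)=\sum_{l\ge1}\tilde q_l\mu^l$, $\tilde g(\mu)=\sum_{l\ge1}l\tilde q_l\mu^l$, $\tilde f(1)=\sum_l\tilde q_l\in(0,\infty]$, $\tilde g(1)=\sum_l l\tilde q_l\in(0,\infty]$. For $z\in X_{0+}\setminus\{0\}$, $\tilde A(z)=\sum_l z_l\ln\big(z_l/(\tilde q_lN(z))\big)$ with $0\ln0=0$, and $\tilde A(0)=0$. *)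

From Stdlib Require Import Reals.
From Coquelicot Require Import Coquelicot.
Open Scope R_scope.

(* Convention: sequences (z_l)_{l>=1} are functions z : nat -> R, where
   z l is z_l for l >= 1; the entry z 0 is unused.  All sums run over
   l = k+1, k = 0,1,2,... *)

Definition qt (q : nat -> R) (Rr : R) (l : nat) : R := q l * Rr ^ l.

Definition ft1 (q : nat -> R) (Rr : R) : Rbar :=
  Lim_seq (fun n => sum_n (fun k => qt q Rr (S k)) n).

Definition gt1 (q : nat -> R) (Rr : R) : Rbar :=
  Lim_seq (fun n => sum_n (fun k => INR (S k) * qt q Rr (S k)) n).

(* z in X : sum_l l |z_l| < oo  (z 0 is required to be 0, as it is not an entry) *)
Definition inX (z : nat -> R) : Prop :=
  z 0%nat = 0 /\ ex_series (fun k => INR (S k) * Rabs (z (S k))).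

Definition inX0p (z : nat -> R) : Prop :=
  inX z /\ forall l : nat, 0 <= z l.

Definition rho (z : nat -> R) : R := Series (fun k => INR (S k) * z (S k)).

Definition Nz (z : nat -> R) : R := Series (fun k => z (S k)).

Definition Aterm (q : nat -> R) (Rr : R) (z : nat -> R) (l : nat) : R :=
  if Req_EM_T (z l) 0 then 0 else z l * ln (z l / (qt q Rr l * Nz z)).

(* \tilde A(z) = sum_{l>=1} z_l ln(z_l/(\tilde q_l N(z))), valued in Rbar
   (the sum may be +oo).  For z = 0 every summand is 0, so \tilde A(0) = 0. *)
Definition Atilde (q : nat -> R) (Rr : R) (z : nat -> R) : Rbar :=
  Lim_seq (fun n => sum_n (fun k => Aterm q Rr z (S k)) n).

(* By [ln y <= y - 1], every summand of [Atilde z] is at least [z_l - qt_l N(z)],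
   strictly unless [z_l = qt_l N(z)]; summing, [Atilde z >= N(z) (1 - ft1)].
   For [rho z > 0] this is [> 0] when [ft1 < 1]; when [ft1 = 1] equality would
   force [z = N(z) qt], and then [gt1 = rho z / N(z)] would be finite.
   On the other hand the point mass [z = (rho*/m) e_m] has
   [Atilde z = - (rho*/m) ln qt_m], which tends to [0] since [qt_(m+1)/qt_m -> 1]
   makes [ln qt_m] sublinear (Cesaro). *)
From Stdlib Require Import Reals Lra Lia Classical.
From Coquelicot Require Import Coquelicot.
Open Scope R_scope.

Lemma ln_lt_sub_1 (y : R) : 0 < y -> y <> 1 -> ln y < y - 1.
Proof.
  intros Hy Hy1.
  assert (Hln : ln y <> 0).
  { intros E. apply Hy1. rewrite <- (exp_ln y), E by exact Hy. apply exp_0. }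
  pose proof (exp_ineq1 (ln y) Hln) as H. rewrite exp_ln in H by exact Hy. lra.
Qed.

Lemma ln_le_sub_1 (y : R) : 0 < y -> ln y <= y - 1.
Proof.
  intros Hy. destruct (Req_dec y 1) as [->|Hy1].
  - rewrite ln_1. lra.
  - left. now apply ln_lt_sub_1.
Qed.

Lemma ln_div_opp (x a : R) : 0 < x -> 0 < a -> ln (x / a) = - ln (a / x).
Proof.
  intros Hx Ha. rewrite <- ln_Rinv by (apply Rdiv_lt_0_compat; lra).
  f_equal. field. lra.
Qed.

Lemma sub_le_mul_ln_div (x a : R) : 0 < x -> 0 < a -> x - a <= x * ln (x / a).
Proof.
  intros Hx Ha. rewrite ln_div_opp by assumption.
  pose proof (ln_le_sub_1 (a / x) ltac:(apply Rdiv_lt_0_compat; lra)) as H.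
  apply (Rmult_le_compat_l x) in H; [|lra].
  replace (x * (a / x - 1)) with (a - x) in H by (field; lra). lra.
Qed.

Lemma sub_lt_mul_ln_div (x a : R) : 0 < x -> 0 < a -> x <> a -> x - a < x * ln (x / a).
Proof.
  intros Hx Ha Hxa. rewrite ln_div_opp by assumption.
  assert (Hax : a / x <> 1).
  { intros E. apply Hxa. replace a with (a / x * x) by (field; lra). rewrite E. ring. }
  pose proof (ln_lt_sub_1 (a / x) ltac:(apply Rdiv_lt_0_compat; lra) Hax) as H.
  apply (Rmult_lt_compat_l x) in H; [|lra].
  replace (x * (a / x - 1)) with (a - x) in H by (field; lra). lra.
Qed.

Lemma sum_n_nonneg (d : nat -> R) (n : nat) : (forall j, 0 <= d j) -> 0 <= sum_n d n.
Proof.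
  intros Hd. induction n as [|n IH].
  - rewrite sum_O. apply Hd.
  - rewrite sum_Sn. specialize (Hd (S n)). unfold plus; simpl. lra.
Qed.

Lemma sum_n_ge_term (d : nat -> R) (k n : nat) :
  (forall j, 0 <= d j) -> (k <= n)%nat -> d k <= sum_n d n.
Proof.
  intros Hd Hkn. induction Hkn as [|n _ IH].
  - destruct k as [|k].
    + rewrite sum_O. lra.
    + rewrite sum_Sn. pose proof (sum_n_nonneg d k Hd). unfold plus; simpl. lra.
  - rewrite sum_Sn. specialize (Hd (S n)). unfold plus; simpl. lra.
Qed.

Lemma Lim_seq_sum_n_series (a : nat -> R) (S : R) :
  is_series a S -> Lim_seq (sum_n a) = Finite S.
Proof. exact (is_lim_seq_unique (sum_n a) S). Qed.

Lemma Lim_seq_sum_n_ge (a b : nat -> R) (B : R) (k : nat) :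
  (forall j, b j <= a j) -> is_series b B ->
  Rbar_le (B + (a k - b k)) (Lim_seq (sum_n a)).
Proof.
  intros Hba Hb.
  rewrite <- (is_lim_seq_unique (fun n => sum_n b n + (a k - b k)) (B + (a k - b k))).
  2: { apply is_lim_seq_plus'; [exact Hb | apply is_lim_seq_const]. }
  apply Lim_seq_le_loc. exists k. intros n Hn.
  assert (Hsplit : sum_n a n = sum_n b n + sum_n (fun j => a j - b j) n).
  { rewrite <- (sum_n_plus b). apply sum_n_ext. intros j. unfold plus; simpl. ring. }
  pose proof (sum_n_ge_term (fun j => a j - b j) k n) as Hgap.
  rewrite Hsplit. apply Rplus_le_compat_l, Hgap; [intros j; specialize (Hba j); lra | exact Hn].
Qed.

Lemma is_series_single (a : nat -> R) (k : nat) :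
  (forall j, j <> k -> a j = 0) -> is_series a (a k).
Proof.
  intros Ha.
  assert (Hsum : forall n, sum_n a n = if Compare_dec.le_dec k n then a k else 0).
  { induction n as [|n IH].
    - rewrite sum_O. destruct (Compare_dec.le_dec k 0).
      + now replace k with 0%nat by lia.
      + apply Ha. lia.
    - rewrite sum_Sn, IH. unfold plus; simpl.
      destruct (Compare_dec.le_dec k n), (Compare_dec.le_dec k (S n)); try lia.
      + rewrite (Ha (S n)) by lia. ring.
      + replace k with (S n) by lia. ring.
      + rewrite (Ha (S n)) by lia. ring. }
  change (is_lim_seq (sum_n a) (a k)).
  apply (is_lim_seq_ext_loc (fun _ => a k)).
  - exists k. intros n Hn. rewrite Hsum. now destruct (Compare_dec.le_dec k n).
  - apply is_lim_seq_const.
Qed.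

Lemma nonneg_series_finite (a : nat -> R) (L : R) :
  (forall k, 0 <= a k) -> Rbar_le (Lim_seq (sum_n a)) L ->
  exists S, is_series a S /\ Lim_seq (sum_n a) = Finite S.
Proof.
  intros Ha HL.
  assert (Hincr : forall n, sum_n a n <= sum_n a (S n)).
  { intros n. rewrite sum_Sn. specialize (Ha (S n)). unfold plus; simpl. lra. }
  pose proof (Lim_seq_correct _ (ex_lim_seq_incr _ Hincr)) as Hlim.
  assert (H0 : Rbar_le (sum_n a 0) (Lim_seq (sum_n a))).
  { rewrite <- (Lim_seq_const (sum_n a 0)). apply Lim_seq_le_loc.
    exists 0%nat. intros n Hn. induction Hn as [|n _ IH]; [lra | specialize (Hincr n); lra]. }
  destruct (Lim_seq (sum_n a)) as [S| |]; simpl in HL, H0; try contradiction.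
  now exists S.
Qed.

Lemma is_lim_seq_div_INR (u : nat -> R) :
  is_lim_seq (fun n => u (S n) - u n) 0 -> is_lim_seq (fun n => u n / INR n) 0.
Proof.
  intros Hdiff.
  set (du := fun n => u (S n) - u n).
  assert (Htele : forall n, sum_f_R0 du n = u (S n) - u 0%nat).
  { induction n as [|n IH]; simpl; [reflexivity | rewrite IH; unfold du; ring]. }
  assert (Hcesaro : is_lim_seq (fun n => sum_f_R0 du (pred n) / INR n) 0).
  { apply is_lim_seq_Reals, Cesaro_1, is_lim_seq_Reals, Hdiff. }
  assert (Hinv : is_lim_seq (fun n => u 0%nat * / INR n) 0).
  { replace (Finite 0) with (Rbar_mult (u 0%nat) (Rbar_inv p_infty))
      by (simpl; f_equal; ring).
    apply is_lim_seq_scal_l, is_lim_seq_inv; [exact is_lim_seq_INR | discriminate]. }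
  apply (is_lim_seq_ext_loc (fun n => sum_f_R0 du (pred n) / INR n + u 0%nat * / INR n)).
  - exists 1%nat. intros n Hn. destruct n as [|n]; [lia|].
    rewrite Htele. simpl pred. field. apply not_0_INR. lia.
  - replace (Finite 0) with (Finite (0 + 0)) by (f_equal; ring).
    now apply is_lim_seq_plus'.
Qed.

Lemma Nz_pos (z : nat -> R) :
  inX0p z -> 0 < rho z -> 0 < Nz z /\ is_series (fun k => z (S k)) (Nz z).
Proof.
  intros [[_ Hex] Hnn] Hrho.
  assert (Hser : is_series (fun k => z (S k)) (Nz z)).
  { apply Series_correct.
    apply (ex_series_le (V := R_CompleteNormedModule) _ _) with (2 := Hex).
    intros k. change (Rabs (z (S k)) <= INR (S k) * Rabs (z (S k))).
    pose proof (Rabs_pos (z (S k))). pose proof (pos_INR k). rewrite S_INR. nra. }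
  split; [|exact Hser].
  pose proof (is_series_single (fun _ => 0) 0%nat (fun _ _ => eq_refl)) as Hzero_ser.
  destruct (classic (exists k, z (S k) <> 0)) as [[k Hk] | Hall0].
  - pose proof (Lim_seq_sum_n_ge (fun j => z (S j)) (fun _ => 0) 0 k
      (fun j => Hnn (S j)) Hzero_ser) as H.
    rewrite (Lim_seq_sum_n_series _ _ Hser) in H. simpl in H.
    specialize (Hnn (S k)). lra.
  - exfalso. enough (rho z = 0) by lra.
    apply is_series_unique, (is_series_ext (fun _ => 0)); [|exact Hzero_ser].
    intros k. change (0 = INR (S k) * z (S k)).
    destruct (Req_dec (z (S k)) 0) as [Hk | Hk]; [rewrite Hk; ring | exfalso; eauto].
Qed.

Lemma gt1_proportional (q : nat -> R) (Rr : R) (z : nat -> R) :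
  inX0p z -> 0 < rho z -> (forall k, z (S k) = qt q Rr (S k) * Nz z) ->
  gt1 q Rr = Finite (rho z / Nz z).
Proof.
  intros Hz Hrho Hprop. destruct (Nz_pos z Hz Hrho) as [HN _].
  destruct Hz as [[_ Hex] Hnn].
  assert (Hrho_ser : is_series (fun k => INR (S k) * z (S k)) (rho z)).
  { apply Series_correct. eapply ex_series_ext; [|exact Hex].
    intros k; cbv beta. now rewrite Rabs_pos_eq by apply Hnn. }
  apply Lim_seq_sum_n_series.
  eapply is_series_ext; [|exact (is_series_scal_r (/ Nz z) _ _ Hrho_ser)].
  intros k. change (INR (S k) * z (S k) * / Nz z = INR (S k) * qt q Rr (S k)).
  rewrite Hprop. field. lra.
Qed.

Definition spike (l0 : nat) (v : R) : nat -> R :=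
  fun l => if Nat.eq_dec l l0 then v else 0.

Lemma spike_at (l0 : nat) (v : R) : spike l0 v l0 = v.
Proof. unfold spike. now destruct (Nat.eq_dec l0 l0). Qed.

Lemma spike_off (l0 l : nat) (v : R) : l <> l0 -> spike l0 v l = 0.
Proof. intros Hl. unfold spike. now destruct (Nat.eq_dec l l0). Qed.

Lemma is_series_spike (f : nat -> R -> R) (m : nat) (v : R) :
  (forall k, f k 0 = 0) -> is_series (fun k => f k (spike (S m) v (S k))) (f m v).
Proof.
  intros Hf0. replace (f m v) with (f m (spike (S m) v (S m))) by now rewrite spike_at.
  apply (is_series_single (fun k => f k (spike (S m) v (S k))) m).
  intros k Hk. rewrite spike_off by congruence. apply Hf0.
Qed.

Lemma spike_inX0p (m : nat) (v : R) : 0 <= v -> inX0p (spike (S m) v).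
Proof.
  intros Hv. split; [split|].
  - now apply spike_off.
  - eexists. apply (is_series_spike (fun k x => INR (S k) * Rabs x)).
    intros k. rewrite Rabs_R0. apply Rmult_0_r.
  - intros l. unfold spike. destruct (Nat.eq_dec l (S m)); lra.
Qed.

Lemma rho_spike (m : nat) (v : R) : rho (spike (S m) v) = INR (S m) * v.
Proof.
  apply is_series_unique, (is_series_spike (fun k x => INR (S k) * x)).
  intros k. apply Rmult_0_r.
Qed.

Lemma Nz_spike (m : nat) (v : R) : Nz (spike (S m) v) = v.
Proof. apply is_series_unique, (is_series_spike (fun _ x => x)). reflexivity. Qed.

Lemma Atilde_spike (q : nat -> R) (Rr : R) (m : nat) (v : R) :
  0 < v -> 0 < qt q Rr (S m) ->
  Atilde q Rr (spike (S m) v) = Finite (- v * ln (qt q Rr (S m))).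
Proof.
  intros Hv Hqt. apply Lim_seq_sum_n_series.
  unfold Aterm. rewrite Nz_spike.
  replace (- v * ln (qt q Rr (S m))) with
    ((fun k x => if Req_EM_T x 0 then 0 else x * ln (x / (qt q Rr (S k) * v))) m v).
  - apply (is_series_spike (fun k x => if Req_EM_T x 0 then 0 else x * ln (x / (qt q Rr (S k) * v)))).
    intros k. destruct (Req_EM_T 0 0); [reflexivity | lra].
  - cbv beta. destruct (Req_EM_T v 0); [lra|].
    replace (v / (qt q Rr (S m) * v)) with (/ qt q Rr (S m)) by (field; lra).
    rewrite ln_Rinv by exact Hqt. ring.
Qed.

Section Weights.

Variables (q : nat -> R) (Rr : R).
Hypothesis q_pos : forall l, (1 <= l)%nat -> 0 < q l.
Hypothesis Rr_pos : 0 < Rr.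

Lemma qt_pos (l : nat) : (1 <= l)%nat -> 0 < qt q Rr l.
Proof. intros Hl. apply Rmult_lt_0_compat; [now apply q_pos | now apply pow_lt]. Qed.

Lemma ft1_finite :
  Rbar_le (ft1 q Rr) 1 -> exists F, is_series (fun k => qt q Rr (S k)) F /\ ft1 q Rr = Finite F.
Proof.
  apply nonneg_series_finite. intros k. left. apply qt_pos. lia.
Qed.

Lemma Aterm_ge (z : nat -> R) (l : nat) : (1 <= l)%nat -> 0 <= z l -> 0 < Nz z ->
  z l - qt q Rr l * Nz z <= Aterm q Rr z l.
Proof.
  intros Hl Hz HN. pose proof (Rmult_lt_0_compat _ _ (qt_pos l Hl) HN) as Hc.
  unfold Aterm. destruct (Req_EM_T (z l) 0) as [->|Hz0].
  - lra.
  - apply sub_le_mul_ln_div; lra.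
Qed.

Lemma Aterm_gt (z : nat -> R) (l : nat) : (1 <= l)%nat -> 0 <= z l -> 0 < Nz z ->
  z l <> qt q Rr l * Nz z -> z l - qt q Rr l * Nz z < Aterm q Rr z l.
Proof.
  intros Hl Hz HN Hne. pose proof (Rmult_lt_0_compat _ _ (qt_pos l Hl) HN) as Hc.
  unfold Aterm. destruct (Req_EM_T (z l) 0) as [->|Hz0].
  - lra.
  - apply sub_lt_mul_ln_div; lra.
Qed.

(* The excess of the [k]-th summand over its bound [z_l - qt_l N(z)] is kept
   for the strict inequality. *)
Lemma Atilde_ge (z : nat -> R) (F : R) (k : nat) :
  inX0p z -> 0 < rho z -> is_series (fun j => qt q Rr (S j)) F ->
  Rbar_le (Nz z * (1 - F) + (Aterm q Rr z (S k) - (z (S k) - qt q Rr (S k) * Nz z)))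
    (Atilde q Rr z).
Proof.
  intros Hz Hrho HF. destruct (Nz_pos z Hz Hrho) as [HN HzN].
  apply (Lim_seq_sum_n_ge (fun j => Aterm q Rr z (S j)) (fun j => z (S j) - qt q Rr (S j) * Nz z)).
  - intros j. apply Aterm_ge; [lia | apply Hz | exact HN].
  - replace (Nz z * (1 - F)) with (Nz z - F * Nz z) by ring.
    exact (is_series_minus _ _ _ _ HzN (is_series_scal_r (Nz z) _ _ HF)).
Qed.

Lemma Atilde_pos (z : nat -> R) (F : R) :
  is_series (fun k => qt q Rr (S k)) F -> F < 1 \/ (F = 1 /\ gt1 q Rr = p_infty) ->
  inX0p z -> 0 < rho z -> Rbar_lt 0 (Atilde q Rr z).
Proof.
  intros HF HNEQ Hz Hrho. destruct (Nz_pos z Hz Hrho) as [HN _].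
  destruct HNEQ as [HF1 | [-> Hg]].
  - eapply Rbar_lt_le_trans; [|exact (Atilde_ge z F 0 Hz Hrho HF)]. simpl.
    pose proof (Aterm_ge z 1 (le_n 1) (proj2 Hz 1%nat) HN).
    pose proof (Rmult_lt_0_compat _ _ HN (proj2 (Rlt_0_minus _ _) HF1)). lra.
  - destruct (classic (exists k, z (S k) <> qt q Rr (S k) * Nz z)) as [[k Hk] | Hprop].
    + eapply Rbar_lt_le_trans; [|exact (Atilde_ge z 1 k Hz Hrho HF)]. simpl.
      pose proof (Aterm_gt z (S k) ltac:(lia) (proj2 Hz (S k)) HN Hk). lra.
    + exfalso. rewrite (gt1_proportional q Rr z Hz Hrho) in Hg; [discriminate|].
      intros k. apply NNPP. intros Hk. apply Hprop. now exists k.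
Qed.

Hypothesis q_ratio : is_lim_seq (fun l => q l / q (S l)) Rr.

Lemma qt_ratio : is_lim_seq (fun l => qt q Rr (S l) / qt q Rr l) 1.
Proof.
  apply (is_lim_seq_ext_loc (fun l => Rr * / (q l / q (S l)))).
  - exists 1%nat. intros l Hl. pose proof (q_pos l Hl). pose proof (q_pos (S l) ltac:(lia)).
    pose proof (pow_lt Rr l Rr_pos). unfold qt. simpl. field. lra.
  - replace (Finite 1) with (Rbar_mult Rr (Rbar_inv Rr)) by (simpl; f_equal; field; lra).
    apply is_lim_seq_scal_l, is_lim_seq_inv; [exact q_ratio | injection; lra].
Qed.

Lemma ln_qt_sublinear : is_lim_seq (fun n => ln (qt q Rr n) / INR n) 0.
Proof.
  apply is_lim_seq_div_INR.
  apply (is_lim_seq_ext_loc (fun n => ln (qt q Rr (S n) / qt q Rr n))).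
  - exists 1%nat. intros n Hn. apply ln_div; apply qt_pos; lia.
  - rewrite <- ln_1. apply is_lim_seq_continuous; [|exact qt_ratio].
    apply continuity_pt_filterlim, continuous_ln. lra.
Qed.

Lemma Atilde_spike_lt (rs eps : R) : 0 < rs -> 0 < eps ->
  exists z, inX0p z /\ rho z = rs /\ Rbar_lt (Atilde q Rr z) eps.
Proof.
  intros Hrs Heps.
  assert (Hlim : is_lim_seq (fun m => - rs * (ln (qt q Rr (S m)) / INR (S m))) 0).
  { replace (Finite 0) with (Rbar_mult (- rs) 0) by (simpl; f_equal; ring).
    apply is_lim_seq_scal_l, (is_lim_seq_incr_1 (fun n => ln (qt q Rr n) / INR n)).
    exact ln_qt_sublinear. }
  apply is_lim_seq_spec in Hlim. destruct (Hlim (mkposreal eps Heps)) as [m Hm].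
  specialize (Hm m (le_n m)). simpl in Hm.
  pose proof (lt_0_INR (S m) ltac:(lia)) as Hm_pos.
  exists (spike (S m) (rs / INR (S m))). split; [|split].
  - apply spike_inX0p. left. now apply Rdiv_lt_0_compat.
  - rewrite rho_spike. field. lra.
  - rewrite Atilde_spike; [|now apply Rdiv_lt_0_compat | apply qt_pos; lia].
    simpl. apply Rabs_lt_between in Hm.
    replace (- (rs / INR (S m)) * ln (qt q Rr (S m)))
      with (- rs * (ln (qt q Rr (S m)) / INR (S m)) - 0) by (field; lra). lra.
Qed.

End Weights.

Theorem theorem9 (q : nat -> R) (Rr : R) (rhostar : R)
  (hqpos : forall l : nat, (1 <= l)%nat -> 0 < q l)
  (hq1 : q 1%nat = 1)
  (hRpos : 0 < Rr)
  (hRlim : is_lim_seq (fun l => q l / q (S l)) Rr)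
  (hNEQ : Rbar_lt (ft1 q Rr) 1 \/ (ft1 q Rr = Finite 1 /\ gt1 q Rr = p_infty))
  (hrho : 0 < rhostar) :
  (* 0 is a lower bound of the set {Atilde z : z in X_{0+}, rho z = rhostar} *)
  (forall z, inX0p z -> rho z = rhostar -> Rbar_le (Finite 0) (Atilde q Rr z)) /\
  (* ... and it is the greatest lower bound *)
  (forall eps : R, 0 < eps ->
     exists z, inX0p z /\ rho z = rhostar /\ Rbar_lt (Atilde q Rr z) (Finite eps)) /\
  (* the infimum 0 is not attained *)
  (forall z, inX0p z -> rho z = rhostar -> Atilde q Rr z <> Finite 0).
Proof.
  assert (Hft1 : Rbar_le (ft1 q Rr) 1).
  { destruct hNEQ as [H | [-> _]]; [now apply Rbar_lt_le | apply Rle_refl]. }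
  destruct (ft1_finite q Rr hqpos hRpos Hft1) as [F [HF HFe]].
  assert (HNEQ : F < 1 \/ (F = 1 /\ gt1 q Rr = p_infty)).
  { rewrite HFe in hNEQ. destruct hNEQ as [H | [H Hg]]; [now left | right].
    split; [now injection H | exact Hg]. }
  assert (Hpos : forall z, inX0p z -> rho z = rhostar -> Rbar_lt 0 (Atilde q Rr z)).
  { intros z Hz Hr. apply (Atilde_pos q Rr hqpos hRpos z F HF HNEQ Hz). now rewrite Hr. }
  split; [|split].
  - intros z Hz Hr. now apply Rbar_lt_le, Hpos.
  - intros eps Heps. now apply Atilde_spike_lt.
  - intros z Hz Hr HA. specialize (Hpos z Hz Hr). rewrite HA in Hpos. simpl in Hpos. lra.
Qed.
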